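(* Let $G,H$ be finite groups, $U\leq G\times H$ a subdirect product, and $A$ an abelian group satisfying the Hypothesis for a set of primes $\pi$. Then $U$ is $A$-extensible if and only if for every $p\in\pi$, $k_1(U')$ contains a Sylow $p$-subgroup of $G'\cap k_1(U)$; equivalently, if and only if for every $p\in\pi$, $k_2(U')$ contains a Sylow $p$-subgroup of $H'\cap k_2(U)$.
   Context: For $U\leq G\times H$: $p_1(U)=\{g:\exists h,(g,h)\in U\}$, $p_2(U)=\{h:\exists g,(g,h)\in U\}$, $k_1(U)=\{g:(g,1)\in U\}$, $k_2(U)=\{h:(1,h)\in U\}$; $U$ is a subdirect product if $p_1(U)=G$, $p_2(U)=H$. $X'$ is the commutator subgroup of $X$. An abelian group $A$ satisfies the Hypothesis (with set of primes $\pi$) if there is a unique set of primes $\pi$ such that for every $n\in\mathbb{N}$ the $n$-torsion part of $A$ is cyclic of order $n_\pi$ (the $\pi$-part of $n$). $U$ is $A$-extensible if every homomorphism $U\to A$ extends to a homomorphism $G\times H\to A$. *)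

From HB Require Import structures.
From mathcomp Require Import all_boot all_order all_algebra all_fingroup all_solvable.
Set Implicit Arguments. Unset Strict Implicit. Unset Printing Implicit Defensive.
Import GRing.Theory.
Local Open Scope group_scope.

Definition p1 (gT hT : finGroupType) (U : {set gT * hT}) : {set gT} :=
  [set x.1 | x in U].
Definition p2 (gT hT : finGroupType) (U : {set gT * hT}) : {set hT} :=
  [set x.2 | x in U].
Definition k1 (gT hT : finGroupType) (U : {set gT * hT}) : {set gT} :=
  [set g | (g, 1) \in U].
Definition k2 (gT hT : finGroupType) (U : {set gT * hT}) : {set hT} :=
  [set h | (1, h) \in U].

Definition subdirect (gT hT : finGroupType) (G : {group gT}) (H : {group hT})
  (U : {group gT * hT}) : Prop :=
  [/\ U \subset setX G H, p1 U = G & p2 U = H].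

Definition is_hom_into (T : finGroupType) (A : zmodType) (D : {set T}) (f : T -> A) :=
  forall x y, x \in D -> y \in D -> f (x * y) = (f x + f y)%R.

Definition extensible (gT hT : finGroupType) (G : {group gT}) (H : {group hT})
  (U : {group gT * hT}) (A : zmodType) : Prop :=
  forall f : gT * hT -> A, is_hom_into U f ->
    exists F : gT * hT -> A, is_hom_into (setX G H) F /\ {in U, F =1 f}.

Definition torsion_cyclic (A : zmodType) (n m : nat) : Prop :=
  exists g : A,
    (forall a : A, (a *+ n = 0)%R <-> exists k, a = (g *+ k)%R) /\
    (forall k, (g *+ k = 0)%R <-> (m %| k)%N).

Definition hypothesis (A : zmodType) (pi : nat_pred) : Prop :=
  {in pi, forall p, prime p} /\
  forall n : nat, (0 < n)%N -> torsion_cyclic A n (n`_pi)%N.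

From HB Require Import structures.
From mathcomp Require Import all_boot all_order all_algebra all_fingroup all_solvable.
From mathcomp Require Import zify.
Set Implicit Arguments. Unset Strict Implicit. Unset Printing Implicit Defensive.
Import GRing.Theory.
Local Open Scope group_scope.

(* Homomorphisms into the abelian group A kill derived subgroups. Conversely, the
   Hypothesis makes every torsion element of A divisible, so a homomorphism defined
   on a subgroup B of X with X' <= B that kills X' extends to X, adjoining one
   element at a time. Hence U is A-extensible iff every homomorphism U -> A kills
   W = U :&: (G' x H'). Since A has an element of order p exactly for p in pi and
   no pi'-torsion, this happens iff no p in pi divides |W : U'|. Subdirectness
   makes W and U' project onto the same H', so |W : U'| = |G' :&: k1 U : k1 U'|,
   and a subgroup S of K contains a Sylow p-subgroup of K iff p does not divide
   |K : S|. *)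

Definition torsion_divisible (A : zmodType) : Prop :=
  forall (c : A) d m, (0 < d)%N -> (c *+ d = 0)%R -> (0 < m)%N ->
  exists a : A, (a *+ m = c)%R.

Section TheHypothesis.
Variables (A : zmodType) (pi : nat_pred).
Hypothesis hA : hypothesis A pi.

Lemma hypothesis_p'torsion_eq0 n (a : A) : pi^'.-nat n -> (a *+ n = 0)%R -> a = 0%R.
Proof.
move=> pi'n an0; have n_gt0 : (0 < n)%N by case/andP: pi'n.
have [_ /(_ n n_gt0) [g [gen_g ord_g]]] := hA.
rewrite part_p'nat // in ord_g.
have g0 : g = 0%R by rewrite -[g]mulr1n; apply/ord_g.
by have [k ->] := proj1 (gen_g a) an0; rewrite g0 mul0rn.
Qed.

Lemma hypothesis_exists_order_p p : p \in pi -> exists2 e : A, (e *+ p = 0)%R & e != 0%R.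
Proof.
move=> pi_p; have [pr_pi tor] := hA; have p_pr := pr_pi p pi_p.
have [g [_ ord_g]] := tor p (prime_gt0 p_pr).
rewrite part_pnat_id ?pnatE // in ord_g.
exists g; first exact/ord_g.
apply/eqP => g0; have /ord_g : (g *+ 1 = 0)%R by rewrite g0.
by rewrite dvdn1 => /eqP p1; rewrite p1 in p_pr.
Qed.

Lemma hypothesis_torsion_divisible : torsion_divisible A.
Proof.
move=> c d m d_gt0 cd0 m_gt0; have [_ tor] := hA.
have md_gt0 : (0 < m * d)%N by rewrite muln_gt0 m_gt0.
have [g [gen_g ord_g]] := tor _ md_gt0.
set M := ((m * d)`_pi)%N in ord_g.
have [k ck] : exists k, c = (g *+ k)%R.
  by apply/gen_g; rewrite mulnC mulrnA cd0 mul0rn.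
rewrite {}ck in cd0 *.
(* [g] has order [M = m_pi * d_pi] and [M] divides [k * d], so [m_pi] divides [k]. *)
have [t ->] : exists t, k = (m`_pi * t)%N.
  have : (M %| k * d)%N by apply/ord_g; rewrite mulrnA.
  rewrite /M partnM // -{2}(partnC pi d_gt0) mulnA mulnAC.
  rewrite dvdn_pmul2r ?part_gt0 // Gauss_dvdl ?coprime_partC // => /dvdnP [t ->].
  by exists t; rewrite mulnC.
have [h gh] : exists h, (h *+ m`_pi^' = g)%R.
  have cop : coprime m`_pi^' M by apply: p'nat_coprime (part_pnat _ _) (part_pnat _ _).
  have [u v Bezout _] := egcdnP M (part_gt0 pi^' m); rewrite (eqP cop) in Bezout.
  exists (g *+ u)%R; rewrite -mulrnA Bezout mulrnDr mulnC mulrnA.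
  by rewrite (proj2 (ord_g M) (dvdnn M)) mul0rn add0r.
exists (h *+ t)%R; rewrite -gh -!mulrnA; congr (_ *+ _)%R.
by rewrite -{1}(partnC pi m_gt0); lia.
Qed.

End TheHypothesis.

Section HomInto.
Variables (T : finGroupType) (A : zmodType).
Implicit Types (D X B : {group T}) (f : T -> A).

Lemma hom_into1 D f : is_hom_into D f -> f 1 = 0%R.
Proof.
by move=> hf; apply/(addrI (f 1)); rewrite addr0 -hf ?mulg1.
Qed.

Lemma hom_intoV D f x : is_hom_into D f -> x \in D -> f x^-1 = (- f x)%R.
Proof.
move=> hf Dx; apply/(addrI (f x)); rewrite subrr -hf ?groupV //.
by rewrite mulgV (hom_into1 hf).
Qed.

Lemma hom_intoX D f x n : is_hom_into D f -> x \in D -> f (x ^+ n) = (f x *+ n)%R.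
Proof.
move=> hf Dx; elim: n => [|n IHn]; first by rewrite (hom_into1 hf).
by rewrite expgS hf ?groupX // IHn mulrS.
Qed.

Lemma hom_intoR D f y z : is_hom_into D f -> y \in D -> z \in D -> f [~ y, z] = 0%R.
Proof.
move=> hf Dy Dz; rewrite commgEl !hf ?groupM ?groupV // !(hom_intoV hf) //.
by rewrite addrA -opprD addNr.
Qed.

Lemma hom_into_der1 D f : is_hom_into D f -> {in D^`(1), forall c, f c = 0%R}.
Proof.
move=> hf; have kerD : group_set [set y in D | f y == 0%R].
  apply/group_setP; split=> [|y z]; first by rewrite inE group1 (hom_into1 hf) /=.
  rewrite !inE => /andP[Dy /eqP fy0] /andP[Dz /eqP fz0].
  by rewrite groupM // hf // fy0 fz0 addr0 eqxx.
have sD'K : D^`(1) \subset Group kerD.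
  rewrite derg1 gen_subG; apply/subsetP => _ /imset2P[y z Dy Dz ->].
  by rewrite inE groupR //= (hom_intoR hf).
by move=> c /(subsetP sD'K); rewrite inE => /andP[_ /eqP].
Qed.

End HomInto.

Section ExtendAlongCycle.
Variables (T : finGroupType) (A : zmodType) (X B : {group T}) (phi : T -> A).
Hypotheses (sX'B : X^`(1) \subset B) (sBX : B \subset X).
Hypotheses (hom_phi : is_hom_into B phi) (phi_X' : {in X^`(1), forall c, phi c = 0%R}).

Lemma hom_into_conj_invariant b y : b \in B -> y \in X -> phi (b ^ y) = phi b.
Proof.
move=> Bb Xy; have X'bR : [~ b, y] \in X^`(1) by rewrite mem_commg // (subsetP sBX).
by rewrite conjg_mulR hom_phi ?(phi_X' X'bR) ?addr0 // (subsetP sX'B).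
Qed.

Section Cycle.
Variables (x : T) (a : A).
Hypotheses (Xx : x \in X) (phi_x : forall j, x ^+ j \in B -> phi (x ^+ j) = (a *+ j)%R).

(* [psi (b * x ^+ k) = phi b + k a] for [b \in B], whichever such decomposition is picked. *)
Let psi y := if [pick k : 'I_#[x] | y * (x ^+ k)^-1 \in B] is Some k
  then (phi (y * (x ^+ k)^-1) + a *+ k)%R else 0%R.

Let psi_repr_invariant y j k : y * (x ^+ k)^-1 \in B -> y * (x ^+ (j + k))^-1 \in B ->
  (phi (y * (x ^+ k)^-1) + a *+ k = phi (y * (x ^+ (j + k))^-1) + a *+ (j + k))%R.
Proof.
move=> Bk Bjk; have yk : y * (x ^+ k)^-1 = (y * (x ^+ (j + k))^-1) * x ^+ j.
  by rewrite expgD invMg mulgA mulgKV.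
have Bxj : x ^+ j \in B by rewrite -[x ^+ j](mulKg (y * (x ^+ (j + k))^-1)) -yk groupM ?groupV.
by rewrite yk hom_phi // phi_x // mulrnDr addrA.
Qed.

Let psiE y k : y * (x ^+ k)^-1 \in B -> psi y = (phi (y * (x ^+ k)^-1) + a *+ k)%R.
Proof.
move=> Bk; rewrite /psi; case: pickP => [k' /= Bk' | noRepr]; last first.
  have k_lt : (k %% #[x] < #[x])%N by rewrite ltn_pmod ?order_gt0.
  by have /= := noRepr (Ordinal k_lt); rewrite expg_mod_order Bk.
have [le_k'k | /ltnW le_kk'] := leqP k' k.
  by rewrite -(subnK le_k'k) in Bk *; apply: psi_repr_invariant.
by rewrite -(subnK le_kk') in Bk' *; symmetry; apply: psi_repr_invariant.
Qed.

Lemma hom_into_extend_cycle_to : exists psi : T -> A,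
  [/\ is_hom_into (B <*> <[x]>) psi, {in B, psi =1 phi} & psi x = a].
Proof.
have nBx : <[x]> \subset 'N(B).
  by rewrite cycle_subG (subsetP (normal_norm (sub_der1_normal sX'B sBX))).
exists psi; split=> [y z||].
- rewrite /= norm_joinEr // => /mulsgP[b _ Bb /cycleP[i ->] ->].
  case/mulsgP=> [c _ Bc /cycleP[j ->] ->].
  have Bcx : c ^ (x ^+ i)^-1 \in B by rewrite memJ_norm // groupV groupX // (subsetP nBx) ?cycle_id.
  have -> : b * x ^+ i * (c * x ^+ j) = (b * c ^ (x ^+ i)^-1) * x ^+ (i + j).
    by rewrite conjgE invgK expgD !mulgA mulgKV.
  have Bbcx : b * c ^ (x ^+ i)^-1 \in B by rewrite groupM.
  rewrite (psiE (k := i + j)) ?mulgK // (psiE (k := i)) ?mulgK //.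
  rewrite (psiE (k := j)) ?mulgK // hom_phi ?hom_into_conj_invariant ?groupV ?groupX //.
  by rewrite mulrnDr addrACA.
- by move=> b Bb; rewrite (psiE (k := 0)) ?invg1 ?mulg1 // addr0.
- by rewrite (psiE (k := 1)) ?mulgV // (hom_into1 hom_phi) add0r.
Qed.

End Cycle.

Lemma hom_into_extend_cycle x : torsion_divisible A -> x \in X ->
  exists psi : T -> A, is_hom_into (B <*> <[x]>) psi /\ {in B, psi =1 phi}.
Proof.
move=> divA Xx; have nBx : x \in 'N(B).
  exact: subsetP (normal_norm (sub_der1_normal sX'B sBX)) x Xx.
pose m := #[coset B x].
have xjB j : (x ^+ j \in B) = (m %| j)%N.
  rewrite order_dvdn -morphX //; apply/idP/eqP => [/coset_id | /coset_idr]//.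
  by apply; rewrite groupX.
have Bxm : x ^+ m \in B by rewrite xjB.
have [a am] : exists a : A, (a *+ m)%R = phi (x ^+ m).
  apply: (divA _ #[x]) => //; last exact: order_gt0.
  by rewrite -(hom_intoX _ hom_phi Bxm) -expgM mulnC expgM expg_order expg1n (hom_into1 hom_phi).
have [|psi [hom_psi psi_phi _]] := @hom_into_extend_cycle_to x a Xx.
  by move=> j; rewrite xjB => /dvdnP[q ->]; rewrite mulnC expgM (hom_intoX _ hom_phi Bxm) -am mulrnA.
by exists psi.
Qed.

End ExtendAlongCycle.

Lemma hom_into_extend (T : finGroupType) (A : zmodType) (X B : {group T}) (phi : T -> A) :
  torsion_divisible A -> X^`(1) \subset B -> B \subset X -> is_hom_into B phi ->
  {in X^`(1), forall c, phi c = 0%R} ->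
  exists F : T -> A, is_hom_into X F /\ {in B, F =1 phi}.
Proof.
move=> divA; have [n] := ubnP (#|X| - #|B|); elim: n => // n IHn in B phi *.
move=> lt_n sX'B sBX hom_phi phi_X'.
have [sXB | /subsetPn[x Xx notBx]] := boolP (X \subset B).
  by exists phi; split=> // y z Xy Xz; apply: hom_phi; apply: (subsetP sXB).
have [psi [hom_psi psi_phi]] := hom_into_extend_cycle sX'B sBX hom_phi phi_X' divA Xx.
have sBBx := joing_subl B <[x]>.
have ltBBx : (#|B| < #|B <*> <[x]>|)%N.
  by apply/proper_card/properP; split=> //; exists x; rewrite ?mem_gen ?inE ?cycle_id ?orbT.
have sBxX : B <*> <[x]> \subset X by rewrite join_subG sBX cycle_subG.
have lt_nBx : (#|X| - #|B <*> <[x]>| < n)%N by have := subset_leq_card sBxX; lia.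
have psi_X' : {in X^`(1), forall c, psi c = 0%R}.
  by move=> c X'c; rewrite psi_phi ?phi_X' ?(subsetP sX'B).
have [F [hom_F F_psi]] :=
  IHn (B <*> <[x]>)%G psi lt_nBx (subset_trans sX'B sBBx) sBxX hom_psi psi_X'.
by exists F; split=> // y By; rewrite F_psi ?psi_phi ?(subsetP sBBx).
Qed.

Section ExtendFromSubgroup.
Variables (T : finGroupType) (A : zmodType) (X U : {group T}).
Hypothesis sUX : U \subset X.

Lemma hom_into_join_der1 f : is_hom_into U f -> {in U :&: X^`(1), forall w, f w = 0%R} ->
  exists phi : T -> A, [/\ is_hom_into (X^`(1) <*> U) phi, {in U, phi =1 f}
                         & {in X^`(1), forall c, phi c = 0%R}].
Proof.
move=> hom_f f_UX'.
pose phi y := if [pick u in U | y * u^-1 \in X^`(1)] is Some u then f u else 0%R.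
have phiE y u : u \in U -> y * u^-1 \in X^`(1) -> phi y = f u.
  move=> Uu X'yu; rewrite /phi; case: pickP => [u' /andP[Uu' X'yu'] | /(_ u)]; last first.
    by rewrite Uu X'yu.
  have X'u'u : u' * u^-1 \in X^`(1).
    have -> : u' * u^-1 = (y * u'^-1)^-1 * (y * u^-1) by rewrite invMg invgK mulgA mulgKV.
    by rewrite groupM ?groupV.
  have UX'u'u : u' * u^-1 \in U :&: X^`(1) by rewrite inE groupM ?groupV.
  by apply/eqP; rewrite -subr_eq0 -(hom_intoV hom_f) // -hom_f ?groupV // f_UX'.
have nX'U : U \subset 'N(X^`(1)) := subset_trans sUX (der_norm 1 X).
exists phi; split=> [y z||].
- rewrite /= norm_joinEr // => /mulsgP[c u X'c Uu ->] /mulsgP[c' u' X'c' Uu' ->].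
  have -> : c * u * (c' * u') = (c * c' ^ u^-1) * (u * u').
    by rewrite conjgE invgK !mulgA mulgKV.
  have X'cc' : c * c' ^ u^-1 \in X^`(1).
    by rewrite groupM // memJ_norm // groupV (subsetP nX'U).
  by rewrite (phiE _ (u * u')) ?(phiE (c * u) u) ?(phiE (c' * u') u') ?mulgK // ?groupM // hom_f.
- by move=> u Uu; rewrite (phiE _ u) ?mulgV.
- by move=> c X'c; rewrite (phiE _ 1) ?invg1 ?mulg1 ?(hom_into1 hom_f).
Qed.

Lemma hom_into_extendsP : torsion_divisible A ->
  (forall f : T -> A, is_hom_into U f -> exists F, is_hom_into X F /\ {in U, F =1 f}) <->
  (forall f : T -> A, is_hom_into U f -> {in U :&: X^`(1), forall w, f w = 0%R}).
Proof.
move=> divA; split=> [ext f hom_f w /setIP[Uw X'w] | vanish f hom_f].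
  by have [F [hom_F F_f]] := ext f hom_f; rewrite -F_f // (hom_into_der1 hom_F).
have [phi [hom_phi phi_f phi_X']] := hom_into_join_der1 hom_f (vanish f hom_f).
have sX'UX : X^`(1) <*> U \subset X by rewrite join_subG der_sub sUX.
have [F [hom_F F_phi]] := hom_into_extend divA (joing_subl _ _) sX'UX hom_phi phi_X'.
by exists F; split=> // u Uu; rewrite F_phi ?phi_f // (subsetP (joing_subr _ _)).
Qed.

End ExtendFromSubgroup.

Lemma hom_into_vanish_indexP (T : finGroupType) (A : zmodType) pi (U W : {group T}) :
  hypothesis A pi -> U^`(1) \subset W -> W \subset U ->
  (forall f : T -> A, is_hom_into U f -> {in W, forall w, f w = 0%R}) <->
  {in pi, forall p, ~~ (p %| #|W : U^`(1)|)%N}.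
Proof.
move=> hA sU'W sWU; have nU'W : W \subset 'N(U^`(1)) := subset_trans sWU (der_norm 1 U).
have hom0 : is_hom_into U^`(1) (fun _ => 0%R : A) by move=> *; rewrite addr0.
split=> [vanish p pi_p | pi'_idx f hom_f w Ww].
  (* An element of order [p] of [W / U'] is sent to one of order [p] of [A] by some
     homomorphism [U -> A], which thus does not vanish on [W]. *)
  apply/negP; rewrite -card_quotient // => /(Cauchy (hA.1 p pi_p))[_ /morphimP[w _ Ww ->]].
  move=> ord_w; have [e pe0 e_neq0] := hypothesis_exists_order_p hA pi_p.
  have wjU' j : (w ^+ j \in U^`(1)) = (p %| j)%N.
    rewrite -ord_w order_dvdn -morphX ?(subsetP nU'W) //.
    by apply/idP/eqP => [/coset_id | /coset_idr]// ->//; rewrite groupX ?(subsetP nU'W).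
  have [|psi [hom_psi psi_U' psi_w]] := @hom_into_extend_cycle_to _ _ U _ _ (subxx _)
      (der_sub 1 U) hom0 (fun _ _ => erefl) w e (subsetP sWU w Ww).
    by move=> j; rewrite wjU' => /dvdnP[q ->]; rewrite mulnC mulrnA pe0 mul0rn.
  have sU'wU : U^`(1) <*> <[w]> \subset U by rewrite join_subG der_sub cycle_subG (subsetP sWU).
  have [F [hom_F F_psi]] :=
    hom_into_extend (hypothesis_torsion_divisible hA) (joing_subl _ _) sU'wU hom_psi psi_U'.
  have U'w_w : w \in U^`(1) <*> <[w]> by rewrite (subsetP (joing_subr _ _)) ?cycle_id.
  by have := vanish F hom_F w Ww; rewrite F_psi // psi_w => /eqP; rewrite (negPf e_neq0).
have idx_pi' : pi^'.-nat #|W : U^`(1)|.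
  apply/(pnatP _ (indexg_gt0 _ _)) => q q_pr q_dvd; apply/negP => pi_q.
  by have := pi'_idx q pi_q; rewrite q_dvd.
have Nw : w \in 'N(U^`(1)) := subsetP nU'W w Ww.
apply: (hypothesis_p'torsion_eq0 hA idx_pi'); rewrite -(hom_intoX _ hom_f) ?(subsetP sWU) //.
apply: (hom_into_der1 hom_f); apply: coset_idr; first by rewrite groupX.
by rewrite morphX // -card_quotient // expg_cardG // mem_quotient.
Qed.

Lemma Sylow_sub_indexP (T : finGroupType) p (K S : {group T}) : prime p -> S \subset K ->
  (exists P : {group T}, p.-Sylow(K) P /\ P \subset S) <-> ~~ (p %| #|K : S|)%N.
Proof.
move=> p_pr sSK; rewrite -p'natE //; split=> [[P [sylP sPS]] | p'KS].
  have [_ _ p'KP] := and3P sylP; apply: pnat_dvd p'KP.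
  by rewrite -(Lagrange_index sSK sPS) dvdn_mulr.
have [P sylP] := Sylow_exists p S; exists P; split; last exact: pHall_sub sylP.
case/and3P: sylP => sPS pP p'SP.
by rewrite /pHall (subset_trans sPS sSK) pP -(Lagrange_index sSK sPS) pnatM p'KS.
Qed.

Section DirectProduct.
Variables gT hT : finGroupType.
Implicit Types V : {group gT * hT}.

Lemma group_set_k1 V : group_set (k1 V).
Proof.
apply/group_setP; split=> [|x y]; first by rewrite inE group1.
by rewrite !inE => Vx Vy; have := groupM Vx Vy; rewrite -{3}[1]mulg1.
Qed.
Canonical k1_group V := Group (group_set_k1 V).

Lemma group_set_k2 V : group_set (k2 V).
Proof.
apply/group_setP; split=> [|x y]; first by rewrite inE group1.
by rewrite !inE => Vx Vy; have := groupM Vx Vy; rewrite -{3}[1]mulg1.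
Qed.
Canonical k2_group V := Group (group_set_k2 V).

Lemma morphim_fst V : fst @* V = p1 V.
Proof. by rewrite morphimEsub ?subsetT. Qed.

Lemma morphim_snd V : snd @* V = p2 V.
Proof. by rewrite morphimEsub ?subsetT. Qed.

Lemma k1S V1 V2 : V1 \subset V2 -> k1 V1 \subset k1 V2.
Proof. by move=> sV12; apply/subsetP => g; rewrite !inE; apply: (subsetP sV12). Qed.

Lemma k2S V1 V2 : V1 \subset V2 -> k2 V1 \subset k2 V2.
Proof. by move=> sV12; apply/subsetP => h; rewrite !inE; apply: (subsetP sV12). Qed.

Lemma k1_setIX V (A : {set gT}) (B : {group hT}) : k1 (V :&: setX A B) = A :&: k1 V.
Proof. by apply/setP => g; rewrite !inE group1 andbT andbC. Qed.

Lemma k2_setIX V (A : {group gT}) (B : {set hT}) : k2 (V :&: setX A B) = B :&: k2 V.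
Proof. by apply/setP => h; rewrite !inE group1 andbC. Qed.

Lemma card_k1 V : #|V| = (#|snd @* V| * #|k1 V|)%N.
Proof.
rewrite card_morphim setTI mulnC -(LagrangeI V ('ker snd)); congr (_ * _)%N.
rewrite -(card_injm (injm_pairg1 gT hT) (subsetT (k1 V))) morphim_pairg1.
by apply: eq_card => -[g h]; rewrite !inE /=; case: eqP => [->|]; rewrite ?andbT ?andbF.
Qed.

Lemma card_k2 V : #|V| = (#|fst @* V| * #|k2 V|)%N.
Proof.
rewrite card_morphim setTI mulnC -(LagrangeI V ('ker fst)); congr (_ * _)%N.
rewrite -(card_injm (injm_pair1g gT hT) (subsetT (k2 V))) morphim_pair1g.
by apply: eq_card => -[g h]; rewrite !inE /=; case: eqP => [->|]; rewrite ?andbT ?andbF.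
Qed.

Lemma index_k1 (D W : {group gT * hT}) : D \subset W -> snd @* W = snd @* D ->
  #|k1 W : k1 D| = #|W : D|.
Proof.
move=> sDW sndWD; have sk1DW := k1S sDW.
have := Lagrange sDW; rewrite (card_k1 W) (card_k1 D) sndWD -(Lagrange sk1DW) -!mulnA.
by move/eqP; rewrite !eqn_pmul2l ?cardG_gt0 // => /eqP.
Qed.

Lemma index_k2 (D W : {group gT * hT}) : D \subset W -> fst @* W = fst @* D ->
  #|k2 W : k2 D| = #|W : D|.
Proof.
move=> sDW fstWD; have sk2DW := k2S sDW.
have := Lagrange sDW; rewrite (card_k2 W) (card_k2 D) fstWD -(Lagrange sk2DW) -!mulnA.
by move/eqP; rewrite !eqn_pmul2l ?cardG_gt0 // => /eqP.
Qed.

Lemma der1_setX (G : {group gT}) (H : {group hT}) :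
  (setX G H)^`(1) = setX G^`(1) H^`(1).
Proof.
have /(der_dprod 1) := setX_dprod G H.
rewrite -morphim_pairg1 -morphim_pair1g -!morphim_der ?subsetT //.
by rewrite morphim_pairg1 morphim_pair1g setX_dprod => <-.
Qed.

End DirectProduct.

Section SubdirectProduct.
Variables (gT hT : finGroupType) (G : {group gT}) (H : {group hT}) (U : {group gT * hT}).
Hypothesis sUGH : U \subset setX G H.

Lemma der1_sub_setIX : U^`(1) \subset U :&: setX G^`(1) H^`(1).
Proof. by have := dergS 1 sUGH; rewrite der1_setX subsetI der_sub. Qed.

Lemma k1_der1_sub : k1 U^`(1) \subset G^`(1) :&: k1 U.
Proof.
by rewrite -(k1_setIX _ _ H^`(1)) k1S ?der1_sub_setIX.
Qed.

Lemma k2_der1_sub : k2 U^`(1) \subset H^`(1) :&: k2 U.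
Proof.
by rewrite -(k2_setIX _ G^`(1)) k2S ?der1_sub_setIX.
Qed.

Lemma index_k1_der1 : p2 U = H ->
  #|G^`(1) :&: k1 U : k1 U^`(1)| = #|U :&: setX G^`(1) H^`(1) : U^`(1)|.
Proof.
move=> p2U; rewrite -(k1_setIX _ _ H^`(1)) index_k1 ?der1_sub_setIX //; apply/eqP.
rewrite eqEsubset (morphimS _ der1_sub_setIX) andbT morphim_der ?subsetT // (morphim_snd U) p2U.
by apply/subsetP => _ /morphimP[[g h] _ /setIP[_ /setXP[_ H'h]] ->].
Qed.

Lemma index_k2_der1 : p1 U = G ->
  #|H^`(1) :&: k2 U : k2 U^`(1)| = #|U :&: setX G^`(1) H^`(1) : U^`(1)|.
Proof.
move=> p1U; rewrite -(k2_setIX _ G^`(1)) index_k2 ?der1_sub_setIX //; apply/eqP.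
rewrite eqEsubset (morphimS _ der1_sub_setIX) andbT morphim_der ?subsetT // (morphim_fst U) p1U.
by apply/subsetP => _ /morphimP[[g h] _ /setIP[_ /setXP[G'g _]] ->].
Qed.

Lemma extensible_indexP (A : zmodType) pi : hypothesis A pi ->
  extensible G H U A <-> {in pi, forall p, ~~ (p %| #|U :&: setX G^`(1) H^`(1) : U^`(1)|)%N}.
Proof.
move=> hA; apply: iff_trans (hom_into_vanish_indexP hA der1_sub_setIX (subsetIl _ _)).
by have := hom_into_extendsP sUGH (hypothesis_torsion_divisible hA); rewrite der1_setX.
Qed.

End SubdirectProduct.

Theorem corollary3p3 (gT hT : finGroupType) (G : {group gT}) (H : {group hT})
  (U : {group gT * hT}) (A : zmodType) (pi : nat_pred) :
  subdirect G H U -> hypothesis A pi ->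
  (extensible G H U A <->
     (forall p, p \in pi -> exists P : {group gT},
        p.-Sylow(G^`(1) :&: k1 U) P /\ P \subset k1 (U^`(1))))
  /\
  (extensible G H U A <->
     (forall p, p \in pi -> exists Q : {group hT},
        p.-Sylow(H^`(1) :&: k2 U) Q /\ Q \subset k2 (U^`(1)))).
Proof.
move=> [sUGH p1U p2U] hA.
have sk1 := k1_der1_sub sUGH; have sk2 := k2_der1_sub sUGH.
split; apply: (iff_trans (extensible_indexP sUGH hA)); split=> Sylow_p p pi_p.
- by apply/(Sylow_sub_indexP (hA.1 p pi_p) sk1); rewrite (index_k1_der1 sUGH p2U) Sylow_p.
- by rewrite -(index_k1_der1 sUGH p2U); apply/(Sylow_sub_indexP (hA.1 p pi_p) sk1)/Sylow_p.
- by apply/(Sylow_sub_indexP (hA.1 p pi_p) sk2); rewrite (index_k2_der1 sUGH p1U) Sylow_p.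
- by rewrite -(index_k2_der1 sUGH p1U); apply/(Sylow_sub_indexP (hA.1 p pi_p) sk2)/Sylow_p.
Qed.
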